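(* Let $(I,\leq)$ and $(J,\preccurlyeq)$ be finite posets, $\mathcal P\colon J^{\mathrm{op}}\to\mathrm{Fun}(I,\mathrm{vect}_K)$ a functor and $M\colon I\to\mathrm{vect}_K$ a functor. (1) If $\mathcal P$ is thin, then $\beta^0_{\mathcal P}M(\mathcal P(a))=\beta^0(\mathcal RM)(a)$ for every $a\in J$ with $\mathcal P(a)\neq0$. (2) If $\mathcal P$ is flat, then $\beta^d_{\mathcal P}M(\mathcal P(a))=\beta^d(\mathcal RM)(a)$ for every $d\geq0$ and every $a\in J$ with $\mathcal P(a)\neq0$.
   Context: $K$ is a field, $\mathrm{vect}_K$ finite-dimensional $K$-vector spaces, $\mathrm{Fun}(I,\mathrm{vect}_K)$ the abelian category of functors $I\to\mathrm{vect}_K$ (hom sets $\mathrm{Nat}_I$). For $a\in J$, $K(a,-)\colon J\to\mathrm{vect}_K$ is the free functor ($K(a,b)=K$ if $a\preccurlyeq b$, else $0$, identity transitions between nonzero values). $\mathcal RM=\mathrm{Nat}_I(\mathcal P(-),M)$ defines $\mathcal R\colon\mathrm{Fun}(I,\mathrm{vect}_K)\to\mathrm{Fun}(J,\mathrm{vect}_K)$ with left adjoint $\mathcal L$ (given by $\mathcal LF=\mathrm{colim}\big(\bigoplus_{a_0\prec a_1}\mathcal P(a_1)\otimes F(a_0)\rightrightarrows\bigoplus_a\mathcal P(a)\otimes F(a)\big)$); $\eta_a\colon K(a,-)\to\mathcal R\mathcal LK(a,-)$ is the unit. $\mathcal P$ is thin if every $\eta_a$ is pointwise surjective, flat if $\eta_a$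 is an isomorphism whenever $\mathcal P(a)\neq0$ (flat implies thin). Standard Betti diagrams: every $F\colon J\to\mathrm{vect}_K$ has a minimal projective resolution, unique up to isomorphism, with $d$-th term $\bigoplus_{b\in J}K(b,-)^{\beta^dF(b)}$, defining $\beta^dF\colon J\to\mathbb N$. Relative Betti diagrams: for the collection $\mathcal P=\{\mathcal P(a)\mid a\in J,\ \mathcal P(a)\neq 0\}$, a $\mathcal P$-epimorphism is a morphism $f$ with $\hom(A,f)$ surjective for all $A\in\mathcal P$; $\mathcal P$-projective, $\mathcal P$-exact, (minimal) $\mathcal P$-covers and (minimal) $\mathcal P$-resolutions are defined relative to these as usual (a minimal $\mathcal P$-resolution is a $\mathcal P$-exact sequence $\cdots\to C_1\to C_0\to M\to 0$ of $\mathcal P$-projectives in which each $C_d\to\ker(C_{d-1}\to C_{d-2})$ is a minimal $\mathcal P$-cover, i.e.\ one whose endomorphisms over the target are all isomorphisms). When $\mathcal P$ is thin, every $M$ has a minimal $\mathcal P$-resolution, unique up to isomorphism, each $C_d$ is isomorphic to $\bigoplus_{A\in\mathcal P}A^{\beta^d_{\mathcal P}M(A)}$ for a unique finitely supported $\beta^d_{\mathcal P}M\colon\mathcal P\to\mathbb N$, the $d$-th $\mathcal P$-Betti diagram of $M$. *)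

From HB Require Import structures.
From mathcomp Require Import all_boot all_order all_algebra.

Set Implicit Arguments.
Unset Strict Implicit.
Unset Printing Implicit Defensive.

Import Order.TTheory GRing.Theory.
Local Open Scope ring_scope.

Section Reps.
Variable K : fieldType.

(* A functor X -> vect_K on a finite poset X, in coordinates: a dimension
   at each point and, for x <= y, the transition matrix acting on row
   vectors (v |-> v *m rmap x y).  Values of rmap on incomparable pairs are
   irrelevant junk. *)
Record rep (d : Order.disp_t) (X : finPOrderType d) := Rep {
  rdim : X -> nat;
  rmap : forall x y : X, 'M[K]_(rdim x, rdim y);
  rmap_id : forall x, rmap x x = 1%:M;
  rmap_comp : forall x y z, (x <= y)%O -> (y <= z)%O ->
      rmap x z = rmap x y *m rmap y z }.

Variables (d : Order.disp_t) (X : finPOrderType d).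

Definition rhom (F G : rep X) := forall x : X, 'M[K]_(rdim F x, rdim G x).

Definition natural (F G : rep X) (f : rhom F G) : Prop :=
  forall x y : X, (x <= y)%O -> rmap F x y *m f y = f x *m rmap G x y.

Definition comp (F G H : rep X) (f : rhom F G) (g : rhom G H) : rhom F H :=
  fun x => f x *m g x.
Definition idh (F : rep X) : rhom F F := fun x => 1%:M.
Definition zeroh (F G : rep X) : rhom F G := fun x => 0.
Definition heq (F G : rep X) (f g : rhom F G) : Prop := forall x, f x = g x.

Definition is_iso (F G : rep X) (f : rhom F G) : Prop :=
  exists g : rhom G F, natural g /\ heq (comp f g) (idh F) /\ heq (comp g f) (idh G).

Definition nonzero (F : rep X) : Prop := exists x, rdim F x != 0%N.

(* the free functor K(b,-) *)
Definition free_dim (b : X) (c : X) : nat := (b <= c)%O.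

Lemma free_map_id (b : X) (c : X) :
  (const_mx 1 : 'M[K]_(free_dim b c, free_dim b c)) = 1%:M.
Proof.
rewrite /free_dim; case: (b <= c)%O => /=.
  by apply/matrixP => i j; rewrite !mxE !ord1.
by apply/matrixP => i; case: i.
Qed.

Lemma free_map_comp (b x y z : X) : (x <= y)%O -> (y <= z)%O ->
  (const_mx 1 : 'M[K]_(free_dim b x, free_dim b z)) =
  (const_mx 1 : 'M[K]_(free_dim b x, free_dim b y)) *m const_mx 1.
Proof.
move=> hxy hyz; rewrite /free_dim.
case hbx: (b <= x)%O => /=.
  have hby : (b <= y)%O by apply: le_trans hxy.
  have hbz : (b <= z)%O by apply: le_trans hyz.
  rewrite hby hbz /=; apply/matrixP => i j.
  by rewrite !mxE big_ord1 !mxE mulr1.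
by apply/matrixP => i; case: i.
Qed.

Definition free_rep (b : X) : rep X :=
  @Rep d X (free_dim b) (fun x y => const_mx 1) (free_map_id b)
       (@free_map_comp b).

(* B is (isomorphic to) the direct sum of Q l ^ (n l), l ranging over L,
   expressed by the biproduct equations *)
Definition is_biprod (L : finType) (Q : L -> rep X) (n : L -> nat) (B : rep X)
  : Prop :=
  exists (iota : forall l, 'I_(n l) -> rhom (Q l) B)
         (pi : forall l, 'I_(n l) -> rhom B (Q l)),
    (forall l i, natural (iota l i) /\ natural (pi l i)) /\
    (forall l i j, heq (comp (iota l i) (pi l j))
                       (if i == j then idh (Q l) else zeroh (Q l) (Q l))) /\
    (forall l l' i j, l != l' -> heq (comp (iota l i) (pi l' j)) (zeroh _ _)) /\
    (forall x, \sum_(l : L) \sum_(i < n l) (pi l i x *m iota l i x) = 1%:M).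

(* target and outgoing map of the d-th term of a resolution
   ... -> C 1 -> C 0 -> N -> 0 *)
Definition res_tgt (N : rep X) (C : nat -> rep X) (n : nat) : rep X :=
  if n is n'.+1 then C n' else N.

Definition res_out (N : rep X) (C : nat -> rep X) (eps : rhom (C 0%N) N)
  (dd : forall n, rhom (C n.+1) (C n)) (n : nat) : rhom (C n) (res_tgt N C n) :=
  match n as n0 return rhom (C n0) (res_tgt N C n0) with
  | 0%N => eps
  | n'.+1 => dd n'
  end.

(* Minimal Q-resolution of N (relative homological algebra w.r.t. the
   collection {Q l}):  each term is a finite direct sum of the Q l with
   multiplicities mult n; the sequence is a complex which is Q-exact
   (Hom(Q l, -) exact); each C n -> ker(...) is a Q-epimorphism and a
   minimal Q-cover (endomorphisms over the target are isomorphisms). *)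
Definition is_min_res (L : finType) (Q : L -> rep X) (N : rep X)
  (C : nat -> rep X) (mult : nat -> L -> nat)
  (dd : forall n, rhom (C n.+1) (C n)) (eps : rhom (C 0%N) N) : Prop :=
  [/\ (forall n, is_biprod Q (mult n) (C n)) /\
        (natural eps /\ forall n, natural (dd n)),
      forall n, heq (comp (dd n) (res_out eps dd n)) (zeroh _ _),
      forall l (g : rhom (Q l) N), natural g ->
        exists h : rhom (Q l) (C 0%N), natural h /\ heq (comp h eps) g,
      forall n l (g : rhom (Q l) (C n)), natural g ->
        heq (comp g (res_out eps dd n)) (zeroh _ _) ->
        exists h : rhom (Q l) (C n.+1), natural h /\ heq (comp h (dd n)) g
    & forall n (e : rhom (C n) (C n)), natural e ->
        heq (comp e (res_out eps dd n)) (res_out eps dd n) -> is_iso e].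

End Reps.

Arguments is_min_res [K d X L] Q N C mult dd eps.


Section Cofunctor.
Variable K : fieldType.
Variables (dI : Order.disp_t) (I : finPOrderType dI).
Variables (dJ : Order.disp_t) (J : finPOrderType dJ).

Record cofunctor := Cofunctor {
  pobj : J -> rep K I;
  pmap : forall a b : J, rhom (pobj b) (pobj a);
  pmap_nat : forall a b, (a <= b)%O -> natural (pmap a b);
  pmap_id : forall a, heq (pmap a a) (idh _);
  pmap_comp : forall a b c, (a <= b)%O -> (b <= c)%O ->
      heq (pmap a c) (comp (pmap b c) (pmap a b)) }.

(* Unit eta_a : K(a,-) -> R L K(a,-), using L K(a,-) = P(a); at b it is
   K(a,b) -> Nat_I(P(b),P(a)), 1 |-> P(a <= b).  [eta_surj P a b] says
   it is surjective at b, [eta_inj P a b] injective at b. *)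
Definition eta_surj (P : cofunctor) (a b : J) : Prop :=
  forall f : rhom (pobj P b) (pobj P a), natural f ->
    ((a <= b)%O -> exists k : K, heq f (fun x => k *: pmap P a b x)) /\
    (~~ (a <= b)%O -> heq f (zeroh _ _)).

Definition eta_inj (P : cofunctor) (a b : J) : Prop :=
  (a <= b)%O -> ~ heq (pmap P a b) (zeroh _ _).

Definition thin (P : cofunctor) : Prop := forall a b, eta_surj P a b.

Definition flat (P : cofunctor) : Prop :=
  forall a, nonzero (pobj P a) -> forall b, eta_surj P a b /\ eta_inj P a b.

(* G : J -> vect_K is (isomorphic to) R M = Nat_I(P(-), M), via the family
   of linear isomorphisms phi b : K^{dim G b} -> Nat_I(P(b), M), natural
   in b (R M (b <= b') is precomposition with P(b <= b')). *)
Definition represents_R (P : cofunctor) (M : rep K I) (G : rep K J)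
  (phi : forall b : J, 'rV[K]_(rdim G b) -> rhom (pobj P b) M) : Prop :=
  [/\ forall b v, natural (phi b v),
      forall b (k : K) v w,
        heq (phi b (k *: v + w)) (fun x => k *: phi b v x + phi b w x),
      forall b v, heq (phi b v) (zeroh _ _) -> v = 0,
      forall b (f : rhom (pobj P b) M), natural f -> exists v, heq (phi b v) f
    & forall b b' v, (b <= b')%O ->
        heq (phi b' (v *m rmap G b b')) (fun x => pmap P b b' x *m phi b v x)].

End Cofunctor.

Arguments represents_R [K dI I dJ J] P M G phi.

(* For a thin cofunctor P, every natural map P(b) -> P(l) is a scalar
   multiple of P(l <= b).  Hence, if C = (+)_l P(l)^(m l) -> T is a minimal relative cover
   of a subfunctor H of b |-> Nat(P(b), T), the composites P(a) -> C -> T through the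
   m a summands P(a) form a basis of H(a) modulo its radical, the sum of the images of
   the H(b), b < a (when P(a) <> 0).  So m a depends only on the functor H up to
   isomorphism.  By Yoneda, Nat_J(K(b,-), R M) = Nat_I(P(b), M) naturally in b, which
   gives the degree-0 statement.  For flat P the scalar coefficients are moreover
   compatible with restriction, so an isomorphism between the H of two minimal covers
   lifts to maps between the covers; by minimality these restrict to an isomorphism
   between the kernel functors, and induction on d gives the higher Betti numbers. *)

From Pilot Require Import Defs.
From HB Require Import structures.
From mathcomp Require Import all_boot all_order all_algebra.
From Stdlib Require Import FunctionalExtensionality ClassicalEpsilon.

Set Implicit Arguments.
Unset Strict Implicit.
Unset Printing Implicit Defensive.
Import Order.TTheory GRing.Theory.
Local Open Scope ring_scope.

(* a bare [comp] would resolve to ssrfun's function composition *)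
Notation hcomp := Defs.comp.

(** * Linear algebra modulo a subspace *)

Section Subspace.
Variables (K : fieldType) (V : lmodType K).

Record subspace (S : V -> Prop) : Prop := Subspace {
  subspace0 : S 0;
  subspaceZD : forall k u v, S u -> S v -> S (k *: u + v) }.

Variables (S : V -> Prop) (subS : subspace S).

Lemma subspaceD u v : S u -> S v -> S (u + v).
Proof. by move=> Su Sv; have := subspaceZD subS 1 Su Sv; rewrite scale1r. Qed.

Lemma subspaceZ k u : S u -> S (k *: u).
Proof.
by move=> Su; rewrite -[_ *: u]addr0; apply: (subspaceZD subS) => //; apply: (subspace0 subS).
Qed.

Lemma subspaceB u v : S u -> S v -> S (u - v).
Proof. by move=> Su Sv; rewrite -scaleN1r addrC; apply: (subspaceZD subS). Qed.

Lemma subspace_sum (I : Type) (r : seq I) (P : pred I) (f : I -> V) :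
  (forall i, P i -> S (f i)) -> S (\sum_(i <- r | P i) f i).
Proof.
move=> Sf; elim/big_rec: _ => [|i v Pi Sv]; first exact: subspace0.
by apply: subspaceD => //; apply: Sf.
Qed.

Definition linear_on (W : lmodType K) (f : V -> W) :=
  forall k u v, S u -> S v -> f (k *: u + v) = k *: f u + f v.

Variables (W : lmodType K) (f : V -> W) (linf : linear_on f).

Lemma linear_on0 : f 0 = 0.
Proof.
have S0 := subspace0 subS; have := linf 1 S0 S0.
by rewrite !scale1r addr0 => /(congr1 (fun w => w - f 0)); rewrite addrK subrr => <-.
Qed.

Lemma linear_onD u v : S u -> S v -> f (u + v) = f u + f v.
Proof. by move=> Su Sv; have := linf 1 Su Sv; rewrite !scale1r. Qed.

Lemma linear_onZ k u : S u -> f (k *: u) = k *: f u.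
Proof.
by move=> Su; rewrite -[_ *: u]addr0 linf ?linear_on0 ?addr0 //; apply: (subspace0 subS).
Qed.

Lemma linear_onB u v : S u -> S v -> f (u - v) = f u - f v.
Proof.
by move=> Su Sv; rewrite -scaleN1r addrC linf // scaleN1r addrC.
Qed.

Lemma linear_on_sum (I : Type) (r : seq I) (P : pred I) (g : I -> V) :
  (forall i, P i -> S (g i)) -> f (\sum_(i <- r | P i) g i) = \sum_(i <- r | P i) f (g i).
Proof.
move=> Sg; elim: r => [|i r IHr]; first by rewrite !big_nil linear_on0.
rewrite !big_cons; case: ifP => // Pi.
by rewrite linear_onD ?IHr //; [apply: Sg | apply: subspace_sum].
Qed.

Lemma linear_on_inj : (forall u, S u -> f u = 0 -> u = 0) ->
  forall u v, S u -> S v -> f u = f v -> u = v.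
Proof.
move=> ker0 u v Su Sv fuv; apply/eqP; rewrite -subr_eq0; apply/eqP.
by apply: ker0; [apply: subspaceB | rewrite linear_onB // fuv subrr].
Qed.

End Subspace.

Lemma linear_on_sub (K : fieldType) (V W : lmodType K) (S S' : V -> Prop) (f : V -> W) :
  (forall u, S' u -> S u) -> linear_on S f -> linear_on S' f.
Proof. by move=> sub linf k u v /sub Su /sub Sv; apply: linf. Qed.

Section BasisModulo.
Variables (K : fieldType) (V : lmodType K) (S W : V -> Prop).

Record basis_mod m (x : 'I_m -> V) : Prop := BasisMod {
  basis_mod_mem : forall i, S (x i);
  basis_mod_span : forall v, S v -> exists c : 'I_m -> K, W (v - \sum_i c i *: x i);
  basis_mod_free : forall c : 'I_m -> K, W (\sum_i c i *: x i) -> forall i, c i = 0 }.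

Hypothesis subW : subspace W.

Lemma basis_mod_card m n (x : 'I_m -> V) (y : 'I_n -> V) :
  basis_mod x -> basis_mod y -> m = n.
Proof.
wlog suff: m n x y / basis_mod x -> basis_mod y -> (m <= n)%N.
  by move=> le bx b_y; apply/eqP; rewrite eqn_leq (le _ _ x y) ?(le _ _ y x).
move=> [Sx spanx freex] [Sy spany _].
have [C hC] := fin_all_exists (fun i => spany _ (Sx i)).
have [D hD] := fin_all_exists (fun j => spanx _ (Sy j)).
pose CD i k := \sum_j C i j * D j k.
suff CD1 : \matrix_(i, j) C i j *m \matrix_(j, k) D j k = 1%:M :> 'M[K]_m.
  by rewrite -(mxrank1 K m) -CD1 (leq_trans (mxrankM_maxl _ _)) ?rank_leq_col.
have WCD i : W (x i - \sum_k CD i k *: x k).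
  suff -> : x i - \sum_k CD i k *: x k =
      (x i - \sum_j C i j *: y j) + \sum_j C i j *: (y j - \sum_k D j k *: x k).
    apply: (subspaceD subW) => //; apply: (subspace_sum subW) => j _.
    exact: (subspaceZ subW).
  have -> : \sum_j C i j *: (y j - \sum_k D j k *: x k) =
      \sum_j C i j *: y j - \sum_k CD i k *: x k.
    under eq_bigr do rewrite scalerBr; rewrite sumrB; congr (_ - _).
    under eq_bigr do rewrite scaler_sumr; rewrite exchange_big /=.
    by apply: eq_bigr => k _; rewrite scaler_suml; apply: eq_bigr => j _; rewrite scalerA.
  by rewrite addrA subrK.
apply/matrixP => i k; rewrite !mxE.
have := freex (fun k => (i == k)%:R - CD i k).
under eq_bigr do rewrite scalerBl; rewrite sumrB (bigD1 i) //= eqxx scale1r.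
rewrite big1 => [|k' /negbTE]; last by rewrite eq_sym => ->; rewrite scale0r.
move=> /(_ _ k) /eqP; rewrite addr0 subr_eq0 => /(_ (WCD i)) /eqP ->.
by apply: eq_bigr => j _; rewrite !mxE.
Qed.

End BasisModulo.

(** * Families of matrices indexed by a poset as a vector space *)

Section RhomVectorSpace.
Variables (K : fieldType) (d : Order.disp_t) (X : finPOrderType d).
Implicit Types F G H : rep K X.

Lemma rhomP F G (f g : rhom F G) : heq f g -> f = g.
Proof. exact: functional_extensionality_dep. Qed.

Lemma ffun_of_rhomK F G :
  cancel (fun f : rhom F G => [ffun x => f x] : {dffun forall x, 'M[K]_(rdim F x, rdim G x)})
         (fun f x => f x).
Proof. by move=> f; apply: rhomP => x; rewrite ffunE. Qed.

HB.instance Definition _ F G := Choice.copy (rhom F G) (can_type (@ffun_of_rhomK F G)).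

Definition addh F G (f g : rhom F G) : rhom F G := fun x => f x + g x.
Definition opph F G (f : rhom F G) : rhom F G := fun x => - f x.
Definition scaleh F G (k : K) (f : rhom F G) : rhom F G := fun x => k *: f x.

Section RhomLmodule.
Variables F G : rep K X.
Implicit Types f g h : rhom F G.

Lemma addhA : associative (@addh F G).
Proof. by move=> f g h; apply: rhomP => x; rewrite /addh addrA. Qed.
Lemma addhC : commutative (@addh F G).
Proof. by move=> f g; apply: rhomP => x; rewrite /addh addrC. Qed.
Lemma add0h : left_id (zeroh F G) (@addh F G).
Proof. by move=> f; apply: rhomP => x; rewrite /addh add0r. Qed.
Lemma addNh : left_inverse (zeroh F G) (@opph F G) (@addh F G).
Proof. by move=> f; apply: rhomP => x; rewrite /addh addNr. Qed.

HB.instance Definition _ := GRing.isZmodule.Build (rhom F G) addhA addhC add0h addNh.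

Lemma scalehA a b f : scaleh a (scaleh b f) = scaleh (a * b) f.
Proof. by apply: rhomP => x; rewrite /scaleh scalerA. Qed.
Lemma scale1h : left_id 1 (@scaleh F G).
Proof. by move=> f; apply: rhomP => x; rewrite /scaleh scale1r. Qed.
Lemma scalehDr : right_distributive (@scaleh F G) +%R.
Proof. by move=> a f g; apply: rhomP => x; rewrite /scaleh scalerDr. Qed.
Lemma scalehDl f : {morph (@scaleh F G)^~ f : a b / a + b}.
Proof. by move=> a b; apply: rhomP => x; rewrite /scaleh scalerDl. Qed.

HB.instance Definition _ :=
  GRing.Zmodule_isLmodule.Build K (rhom F G) scalehA scale1h scalehDr scalehDl.
End RhomLmodule.

Lemma addhE F G (f g : rhom F G) x : (f + g) x = f x + g x. Proof. by []. Qed.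

Lemma scalehE F G k (f : rhom F G) x : (k *: f) x = k *: f x. Proof. by []. Qed.

Lemma sumhE F G (I : Type) (r : seq I) (P : pred I) (f : I -> rhom F G) x :
  (\sum_(i <- r | P i) f i) x = \sum_(i <- r | P i) f i x.
Proof. by elim/big_rec2: _ => // i g h _ <-. Qed.

Section Composition.
Variables F G H L : rep K X.
Implicit Types (f : rhom F G) (g : rhom G H).

Lemma hcompA f g (h : rhom H L) : hcomp (hcomp f g) h = hcomp f (hcomp g h).
Proof. by apply: rhomP => x; rewrite /Defs.comp mulmxA. Qed.

Lemma hcomp_idl f : hcomp (idh F) f = f.
Proof. by apply: rhomP => x; rewrite /Defs.comp mul1mx. Qed.

Lemma hcomp_idr f : hcomp f (idh G) = f.
Proof. by apply: rhomP => x; rewrite /Defs.comp mulmx1. Qed.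

Lemma hcomp0l g : hcomp (0 : rhom F G) g = 0.
Proof. by apply: rhomP => x; rewrite /Defs.comp mul0mx. Qed.

Lemma hcomp0r f : hcomp f (0 : rhom G H) = 0.
Proof. by apply: rhomP => x; rewrite /Defs.comp mulmx0. Qed.

Lemma hcompDl f1 f2 g : hcomp (f1 + f2) g = hcomp f1 g + hcomp f2 g.
Proof. by apply: rhomP => x; rewrite /Defs.comp mulmxDl. Qed.

Lemma hcompDr f g1 g2 : hcomp f (g1 + g2) = hcomp f g1 + hcomp f g2.
Proof. by apply: rhomP => x; rewrite /Defs.comp mulmxDr. Qed.

Lemma hcompBl f1 f2 g : hcomp (f1 - f2) g = hcomp f1 g - hcomp f2 g.
Proof. by apply: rhomP => x; rewrite /Defs.comp mulmxBl. Qed.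

Lemma hcompBr f g1 g2 : hcomp f (g1 - g2) = hcomp f g1 - hcomp f g2.
Proof. by apply: rhomP => x; rewrite /Defs.comp mulmxBr. Qed.

Lemma hcompZl k f g : hcomp (k *: f) g = k *: hcomp f g.
Proof. by apply: rhomP => x; rewrite /Defs.comp !scalehE scalemxAl. Qed.

Lemma hcompZr k f g : hcomp f (k *: g) = k *: hcomp f g.
Proof. by apply: rhomP => x; rewrite /Defs.comp !scalehE scalemxAr. Qed.

Lemma hcomp_suml (I : Type) (r : seq I) (P : pred I) (f : I -> rhom F G) g :
  hcomp (\sum_(i <- r | P i) f i) g = \sum_(i <- r | P i) hcomp (f i) g.
Proof. by apply: rhomP => x; rewrite /Defs.comp !sumhE mulmx_suml. Qed.

Lemma hcomp_sumr (I : Type) (r : seq I) (P : pred I) f (g : I -> rhom G H) :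
  hcomp f (\sum_(i <- r | P i) g i) = \sum_(i <- r | P i) hcomp f (g i).
Proof. by apply: rhomP => x; rewrite /Defs.comp !sumhE mulmx_sumr. Qed.

Lemma natural_hcomp f g : natural f -> natural g -> natural (hcomp f g).
Proof. by move=> nf ng x y le; rewrite /Defs.comp mulmxA nf // -!mulmxA ng. Qed.

Lemma natural_id : natural (idh F).
Proof. by move=> x y _; rewrite /idh mulmx1 mul1mx. Qed.

Lemma natural_subspace : subspace (@natural K d X F G).
Proof.
split=> [x y _|k f1 f2 nf1 nf2 x y le]; first by rewrite mulmx0 mul0mx.
rewrite !addhE !scalehE mulmxDr mulmxDl.
by rewrite -scalemxAr -scalemxAl nf1 // nf2.
Qed.

End Composition.

End RhomVectorSpace.

(** * Thin and flat cofunctors *)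

Section LineCoordinate.
Variables (K : fieldType) (d : Order.disp_t) (X : finPOrderType d) (F G : rep K X).
Implicit Types r h : rhom F G.

Lemma nonzero_codom r : r != 0 -> nonzero G.
Proof.
case: (boolP [exists x, rdim G x != 0%N]) => [/existsP //|/existsPn zG].
case/eqP; apply: rhomP => x; apply/matrixP => i j; exfalso.
by move: (ltn_ord j) (zG x); move: (nat_of_ord j) => n; rewrite negbK => /[swap] /eqP ->.
Qed.

Lemma idh_neq0 : nonzero F -> idh F != 0.
Proof.
case=> x nzx; apply/eqP => /(congr1 (fun f => f x)) /matrixP.
have i : 'I_(rdim F x) by exists 0%N; rewrite lt0n.
by move/(_ i i); rewrite !mxE eqxx; apply/eqP; rewrite oner_eq0.
Qed.

(* Reading [h] off a fixed nonzero entry of [r] makes the coordinate linear in [h]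
   everywhere, not only on the line spanned by [r]. *)
Definition line_coord r h : K :=
  if [pick x | r x != 0] is Some x then
    if [pick ij | r x ij.1 ij.2 != 0] is Some ij then h x ij.1 ij.2 / r x ij.1 ij.2
    else 0
  else 0.

Lemma line_coord_lin r k g h :
  line_coord r (k *: g + h) = k * line_coord r g + line_coord r h.
Proof.
rewrite /line_coord; case: pickP => [x _|_]; last by rewrite mulr0 addr0.
case: pickP => [ij _|_]; last by rewrite mulr0 addr0.
by rewrite addhE scalehE !mxE mulrDl mulrA.
Qed.

Lemma line_coordZ r k : r != 0 -> line_coord r (k *: r) = k.
Proof.
move=> nzr; rewrite /line_coord; case: pickP => [x rx|r0]; last first.
  by case/eqP: nzr; apply: rhomP => x; apply/eqP; rewrite -[_ == _]negbK r0.
case: pickP => [ij rij|r0]; first by rewrite scalehE mxE mulfK.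
by case/matrix0Pn: rx => i [j rij]; move: (r0 (i, j)); rewrite rij.
Qed.

Lemma line_coordK r h k : h = k *: r -> h = line_coord r h *: r.
Proof.
have [->|nzr] := eqVneq r 0; first by rewrite !scaler0.
by move=> ->; rewrite line_coordZ.
Qed.

End LineCoordinate.

Section ThinCofunctor.
Variables (K : fieldType) (dX : Order.disp_t) (X : finPOrderType dX).
Variables (dJ : Order.disp_t) (J : finPOrderType dJ) (P : cofunctor K X J).
Local Notation rho := (Defs.pmap P).

Lemma pmap_idE b : rho b b = idh (pobj P b).
Proof. exact/rhomP/pmap_id. Qed.

Lemma pmap_compE l b a : (l <= b)%O -> (b <= a)%O -> rho l a = hcomp (rho b a) (rho l b).
Proof. by move=> lb ba; apply/rhomP/pmap_comp. Qed.

Hypothesis thinP : thin P.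

Lemma thin_hom l b (h : rhom (pobj P b) (pobj P l)) : natural h ->
  exists k, h = k *: rho l b.
Proof.
move=> nh; have [le nle] := thinP nh; case: (boolP (l <= b)%O) => [/le [k hk]|/nle h0].
  by exists k; apply: rhomP.
by exists 0; rewrite scale0r; apply: rhomP.
Qed.

Lemma thin_hom_nle l b (h : rhom (pobj P b) (pobj P l)) :
  ~~ (l <= b)%O -> natural h -> h = 0.
Proof. by move=> nlb nh; have [_ /(_ nlb)/rhomP] := thinP nh. Qed.

Definition hcoef l b (h : rhom (pobj P b) (pobj P l)) : K := line_coord (rho l b) h.

Lemma hcoefP l b (h : rhom (pobj P b) (pobj P l)) : natural h -> h = hcoef h *: rho l b.
Proof. by case/thin_hom => k; apply: line_coordK. Qed.

Lemma hcoef_lin l b k (g h : rhom (pobj P b) (pobj P l)) :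
  hcoef (k *: g + h) = k * hcoef g + hcoef h.
Proof. exact: line_coord_lin. Qed.

Lemma hcoef0 l b : hcoef (0 : rhom (pobj P b) (pobj P l)) = 0.
Proof.
by rewrite /hcoef /line_coord; case: pickP => // x _; case: pickP => // ij _; rewrite mxE mul0r.
Qed.

Lemma hcoef_nle l b (h : rhom (pobj P b) (pobj P l)) :
  ~~ (l <= b)%O -> natural h -> hcoef h = 0.
Proof. by move=> nlb /(thin_hom_nle nlb) ->; apply: hcoef0. Qed.

End ThinCofunctor.

Section FlatCofunctor.
Variables (K : fieldType) (dX : Order.disp_t) (X : finPOrderType dX).
Variables (dJ : Order.disp_t) (J : finPOrderType dJ) (P : cofunctor K X J).
Local Notation rho := (Defs.pmap P).
Hypothesis flatP : flat P.

Lemma flat_thin : thin P.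
Proof.
move=> a b; have [nza|za] := boolP [exists x, rdim (pobj P a) x != 0%N].
  by case: (flatP (existsP nza) b).
have f0 (f : rhom (pobj P b) (pobj P a)) : f = 0.
  by apply/eqP; apply: contraNT za => /nonzero_codom [x nzx]; apply/existsP; exists x.
move=> f _; rewrite (f0 f); split=> [_|//]; exists 0 => x.
by rewrite scale0r.
Qed.

Lemma flat_pmap_neq0 l a : (l <= a)%O -> nonzero (pobj P l) -> rho l a != 0.
Proof. by move=> la nzl; apply/eqP => r0; case: (flatP nzl a) => _ /(_ la); rewrite r0; apply. Qed.

(* This is where flatness is used: P(l <= b) <> 0 forces P(l <= a) <> 0. *)
Lemma hcoef_restr l b a (h : rhom (pobj P b) (pobj P l)) : (b <= a)%O -> natural h ->
  hcoef (hcomp (rho b a) h) = hcoef h.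
Proof.
move=> ba nh; have thinP := flat_thin.
have [lb|nlb] := boolP (l <= b)%O; last by rewrite (thin_hom_nle thinP nlb nh) hcomp0r !hcoef0.
have [k ->] := thin_hom thinP nh; have [->|nzr] := eqVneq (rho l b) 0.
  by rewrite scaler0 hcomp0r !hcoef0.
have nzl := nonzero_codom nzr; have la := le_trans lb ba.
by rewrite /hcoef hcompZr -pmap_compE // !line_coordZ ?flat_pmap_neq0.
Qed.

End FlatCofunctor.

(** * Subfunctors of b |-> Nat(P(b), T) and their isomorphisms *)

Section Subfunctors.
Variables (K : fieldType) (dJ : Order.disp_t) (J : finPOrderType dJ).

Definition hom_pred dX (X : finPOrderType dX) (P : cofunctor K X J) (T : rep K X) :=
  forall b : J, rhom (pobj P b) T -> Prop.

Definition hom_map dX1 (X1 : finPOrderType dX1) (P1 : cofunctor K X1 J) (T1 : rep K X1)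
  dX2 (X2 : finPOrderType dX2) (P2 : cofunctor K X2 J) (T2 : rep K X2) :=
  forall b : J, rhom (pobj P1 b) T1 -> rhom (pobj P2 b) T2.

Section Subfunctor.
Variables (dX : Order.disp_t) (X : finPOrderType dX) (P : cofunctor K X J) (T : rep K X).

Record subfunctor (H : hom_pred P T) : Prop := Subfunctor {
  subfunctor_natural : forall b g, H b g -> natural g;
  subfunctor_subspace : forall b, subspace (H b);
  subfunctor_restr : forall b a g, (b <= a)%O -> H b g -> H a (hcomp (Defs.pmap P b a) g) }.

Definition natural_hom : hom_pred P T := fun b g => natural g.

Lemma natural_hom_subfunctor : subfunctor natural_hom.
Proof.
split=> // [b|b a g ba ng]; first exact: natural_subspace.
by apply: natural_hcomp => //; apply: pmap_nat.
Qed.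

End Subfunctor.

Section Kernel.
Variables (dX : Order.disp_t) (X : finPOrderType dX) (P : cofunctor K X J).
Variables (C T : rep K X) (out : rhom C T).

Definition hom_ker : hom_pred P C :=
  fun b g => natural g /\ hcomp g out = 0.

Lemma hom_ker_subfunctor : subfunctor hom_ker.
Proof.
have natS := natural_subspace (pobj P _) C.
split=> [b g []//|b|b a g ba [ng g0]].
  split=> [|k u v [nu u0] [nv v0]]; first by split; [apply: (subspace0 (natS _)) | rewrite hcomp0l].
  split; first exact: (subspaceZD (natS _)).
  by rewrite hcompDl hcompZl u0 v0 scaler0 addr0.
by split; [apply/natural_hcomp/ng/pmap_nat | rewrite hcompA g0 hcomp0r].
Qed.

End Kernel.

Variables (dX1 : Order.disp_t) (X1 : finPOrderType dX1) (P1 : cofunctor K X1 J).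
Variables (dX2 : Order.disp_t) (X2 : finPOrderType dX2) (P2 : cofunctor K X2 J).
Variables (T1 : rep K X1) (T2 : rep K X2).
Variables (H1 : hom_pred P1 T1) (H2 : hom_pred P2 T2).
Arguments H1 : clear implicits.
Arguments H2 : clear implicits.

Record subfun_morph (th : hom_map P1 T1 P2 T2) : Prop :=
 SubfunMorph {
  morph_mem : forall b g, H1 b g -> H2 b (th b g);
  morph_linear : forall b, linear_on (H1 b) (th b);
  morph_restr : forall b a g, (b <= a)%O -> H1 b g ->
    th a (hcomp (Defs.pmap P1 b a) g) = hcomp (Defs.pmap P2 b a) (th b g) }.

Record subfun_iso (th : hom_map P1 T1 P2 T2) : Prop :=
 SubfunIso {
  iso_morph : subfun_morph th;
  iso_ker : forall b g, H1 b g -> th b g = 0 -> g = 0;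
  iso_surj : forall b g', H2 b g' -> exists2 g, H1 b g & th b g = g' }.

End Subfunctors.

Arguments natural_hom {K dJ J dX X} P T b g.
Arguments hom_ker {K dJ J dX X} P {C T} out b g.
Arguments morph_linear {K dJ J dX1 X1 P1 dX2 X2 P2 T1 T2 H1 H2 th} s b.

Section SubfunctorIsoInverse.
Variables (K : fieldType) (dJ : Order.disp_t) (J : finPOrderType dJ).
Variables (dX1 : Order.disp_t) (X1 : finPOrderType dX1) (P1 : cofunctor K X1 J).
Variables (dX2 : Order.disp_t) (X2 : finPOrderType dX2) (P2 : cofunctor K X2 J).
Variables (T1 : rep K X1) (T2 : rep K X2).
Variables (H1 : hom_pred P1 T1) (H2 : hom_pred P2 T2).
Arguments H1 : clear implicits.
Arguments H2 : clear implicits.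
Hypotheses (subH1 : subfunctor H1) (subH2 : subfunctor H2).

Lemma subfun_iso_inj th : subfun_iso H1 H2 th ->
  forall b g h, H1 b g -> H1 b h -> th b g = th b h -> g = h.
Proof.
case=> [[_ lin _] ker _] b.
exact: (linear_on_inj (subfunctor_subspace subH1 b) (lin b)) (ker b).
Qed.

Lemma subfun_iso_sym th : subfun_iso H1 H2 th ->
  exists th', [/\ subfun_iso H2 H1 th',
    forall b g, H1 b g -> th' b (th b g) = g &
    forall b g', H2 b g' -> th b (th' b g') = g'].
Proof.
move=> isoth; have [[mem lin restr] ker surj] := isoth; have inj := subfun_iso_inj isoth.
pose th' b g' := epsilon (inhabits 0) (fun g => H1 b g /\ th b g = g').
have th'P b g' : H2 b g' -> H1 b (th' b g') /\ th b (th' b g') = g'.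
  move=> /surj [g Hg thg].
  by apply: (epsilon_spec _ (fun g => H1 b g /\ th b g = g')); exists g.
have thK b g : H1 b g -> th' b (th b g) = g.
  by move=> Hg; have [H'g e] := th'P b _ (mem _ _ Hg); apply: inj e.
have subS1 := subfunctor_subspace subH1; have subS2 := subfunctor_subspace subH2.
exists th'; split=> // [|b g' /th'P[] //]; split; [split|..].
- by move=> b g' /th'P[].
- move=> b k g' h' Hg' Hh'; have [Ag Bg] := th'P b g' Hg'; have [Ah Bh] := th'P b h' Hh'.
  have [Agh Bgh] := th'P b _ (subspaceZD (subS2 b) k Hg' Hh').
  by apply: inj => //; [apply: subspaceZD | rewrite Bgh lin // Bg Bh].
- move=> b a g' ba Hg'; have [Ag Bg] := th'P b g' Hg'.
  have [Ar Br] := th'P a _ (subfunctor_restr subH2 ba Hg').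
  by apply: inj => //; [apply: subfunctor_restr | rewrite Br restr // Bg].
- by move=> b g' Hg' /(congr1 (th b)); rewrite (th'P b g' Hg').2 (linear_on0 (subS1 b) (lin b)).
- by move=> b g Hg; exists (th b g); [apply: mem | apply: thK].
Qed.

End SubfunctorIsoInverse.

Section SubfunctorMorphComp.
Variables (K : fieldType) (dJ : Order.disp_t) (J : finPOrderType dJ).
Variables (dX1 : Order.disp_t) (X1 : finPOrderType dX1) (P1 : cofunctor K X1 J).
Variables (dX2 : Order.disp_t) (X2 : finPOrderType dX2) (P2 : cofunctor K X2 J).
Variables (dX3 : Order.disp_t) (X3 : finPOrderType dX3) (P3 : cofunctor K X3 J).
Variables (T1 : rep K X1) (T2 : rep K X2) (T3 : rep K X3).
Variables (H1 : hom_pred P1 T1) (H2 : hom_pred P2 T2) (H3 : hom_pred P3 T3).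
Variables (th : hom_map P1 T1 P2 T2) (th' : hom_map P2 T2 P3 T3).
Arguments th : clear implicits.
Arguments th' : clear implicits.

Lemma subfun_morph_comp : subfun_morph H1 H2 th -> subfun_morph H2 H3 th' ->
  subfun_morph H1 H3 (fun b g => th' b (th b g)).
Proof.
case=> mem lin restr [mem' lin' restr']; split=> [b g /mem /mem' //|b k u v Hu Hv|b a g ba Hg].
  by rewrite lin // lin' //; apply: mem.
by rewrite restr // restr' //; apply: mem.
Qed.

End SubfunctorMorphComp.

(** * Biproducts and minimal covers *)

Section Biproduct.
Variables (K : fieldType) (dX : Order.disp_t) (X : finPOrderType dX).
Variables (dJ : Order.disp_t) (J : finPOrderType dJ) (P : cofunctor K X J).
Variables (C : rep K X) (m : J -> nat).
Variables (iota : forall l, 'I_(m l) -> rhom (pobj P l) C).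
Variables (pi : forall l, 'I_(m l) -> rhom C (pobj P l)).
Arguments iota : clear implicits.
Arguments pi : clear implicits.

Record biprod : Prop := Biprod {
  natural_iota : forall l i, natural (iota l i);
  natural_pi : forall l i, natural (pi l i);
  iota_pi : forall l i j, hcomp (iota l i) (pi l j) = if i == j then idh _ else 0;
  iota_pi_neq : forall l l' i j, l != l' -> hcomp (iota l i) (pi l' j) = 0;
  sum_pi_iota : \sum_l \sum_i hcomp (pi l i) (iota l i) = idh C }.

Hypothesis bp : biprod.

Lemma biprod_hom_decomp (Y : rep K X) (f : rhom C Y) :
  f = \sum_l \sum_i hcomp (pi l i) (hcomp (iota l i) f).
Proof.
rewrite -{1}[f]hcomp_idl -(sum_pi_iota bp) hcomp_suml; apply: eq_bigr => l _.
by rewrite hcomp_suml; apply: eq_bigr => i _; rewrite hcompA.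
Qed.

Lemma biprod_hom_ext (Y : rep K X) (f f' : rhom C Y) :
  (forall l i, hcomp (iota l i) f = hcomp (iota l i) f') -> f = f'.
Proof.
move=> eq_f; rewrite [f]biprod_hom_decomp [f']biprod_hom_decomp.
by apply: eq_bigr => l _; apply: eq_bigr => i _; rewrite eq_f.
Qed.

Lemma biprod_decomp b (g : rhom (pobj P b) C) :
  g = \sum_l \sum_i hcomp (hcomp g (pi l i)) (iota l i).
Proof.
rewrite -{1}[g]hcomp_idr -(sum_pi_iota bp) hcomp_sumr; apply: eq_bigr => l _.
by rewrite hcomp_sumr; apply: eq_bigr => i _; rewrite hcompA.
Qed.

End Biproduct.

Arguments biprod {K dX X dJ J P C} m iota pi.

Lemma is_biprodP (K : fieldType) (dX : Order.disp_t) (X : finPOrderType dX)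
    (dJ : Order.disp_t) (J : finPOrderType dJ) (P : cofunctor K X J) (C : rep K X) m :
  is_biprod (pobj P) m C ->
  exists (iota : forall l, 'I_(m l) -> rhom (pobj P l) C) pi, biprod m iota pi.
Proof.
case=> iota [pi [nat [diag [off sum1]]]]; exists iota, pi; split.
- by move=> l i; case: (nat l i).
- by move=> l i; case: (nat l i).
- by move=> l i j; apply/rhomP/diag.
- by move=> l l' i j ne; apply/rhomP/off.
- by apply: rhomP => x; rewrite !sumhE; under eq_bigr do rewrite sumhE; apply: sum1.
Qed.

Section NaturalMorphisms.
Variables (K : fieldType) (dX : Order.disp_t) (X : finPOrderType dX).
Variables (dJ : Order.disp_t) (J : finPOrderType dJ) (P : cofunctor K X J).
Hypothesis thinP : thin P.
Variables (C1 C2 : rep K X) (phi : hom_map P C1 P C2).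
Arguments phi : clear implicits.
Hypothesis phi_morph : subfun_morph (natural_hom P C1) (natural_hom P C2) phi.
Variables (m : J -> nat) (iota : forall l, 'I_(m l) -> rhom (pobj P l) C1).
Variables (pi : forall l, 'I_(m l) -> rhom C1 (pobj P l)).
Arguments iota : clear implicits.
Arguments pi : clear implicits.
Hypothesis bp : biprod m iota pi.

Lemma morph_hcomp b l (h : rhom (pobj P b) (pobj P l)) (g : rhom (pobj P l) C1) :
  natural h -> natural g -> phi b (hcomp h g) = hcomp h (phi l g).
Proof.
case: phi_morph => _ lin restr nh ng; have [lb|nlb] := boolP (l <= b)%O.
  have [k ->] := thin_hom thinP nh.
  rewrite !hcompZl (linear_onZ (natural_subspace _ _) (lin b)) ?restr //.
  exact/natural_hcomp/ng/pmap_nat.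
rewrite (thin_hom_nle thinP nlb nh) !hcomp0l.
exact: (linear_on0 (natural_subspace _ _) (lin b)).
Qed.

Lemma morph_postcomp :
  exists2 e : rhom C1 C2, natural e & forall b g, natural g -> phi b g = hcomp g e.
Proof.
have [_ lin _] := phi_morph.
exists (\sum_l \sum_i hcomp (pi l i) (phi l (iota l i))).
  apply: (subspace_sum (natural_subspace _ _)) => l _.
  apply: (subspace_sum (natural_subspace _ _)) => i _.
  apply: natural_hcomp; first exact: (natural_pi bp).
  exact/(morph_mem phi_morph)/(natural_iota bp).
move=> b g ng; rewrite {1}(biprod_decomp bp g) hcomp_sumr.
have nt l i : natural (hcomp (hcomp g (pi l i)) (iota l i)).
  by apply/natural_hcomp/(natural_iota bp)/natural_hcomp/(natural_pi bp).
rewrite (linear_on_sum (natural_subspace _ _) (lin b)) => [|l _]; last first.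
  exact: (subspace_sum (natural_subspace _ _)).
apply: eq_bigr => l _; rewrite hcomp_sumr (linear_on_sum (natural_subspace _ _) (lin b)) //.
apply: eq_bigr => i _; rewrite morph_hcomp ?hcompA //.
  exact/natural_hcomp/(natural_pi bp).
exact: (natural_iota bp).
Qed.

End NaturalMorphisms.

Section Radical.
Variables (K : fieldType) (dX : Order.disp_t) (X : finPOrderType dX).
Variables (dJ : Order.disp_t) (J : finPOrderType dJ) (P : cofunctor K X J).
Local Notation rho := (Defs.pmap P).
Variables (T : rep K X) (H : hom_pred P T).
Arguments H : clear implicits.

Definition radical a (g : rhom (pobj P a) T) : Prop :=
  exists2 w : forall b, rhom (pobj P b) T,
    forall b, (b < a)%O -> H b (w b) & g = \sum_(b | (b < a)%O) hcomp (rho b a) (w b).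

Arguments radical : clear implicits.

Hypothesis subH : subfunctor H.

Lemma radical_subspace a : subspace (radical a).
Proof.
split=> [|k g g' [w Hw ->] [w' Hw' ->]].
  exists (fun b => 0) => [b _|]; first exact: (subspace0 (subfunctor_subspace subH b)).
  by rewrite big1 // => b _; rewrite hcomp0r.
exists (fun b => k *: w b + w' b) => [b ba|].
  by apply: (subspaceZD (subfunctor_subspace subH b)); [apply: Hw | apply: Hw'].
by rewrite scaler_sumr -big_split; apply: eq_bigr => b _; rewrite hcompDr hcompZr.
Qed.

End Radical.

Arguments radical {K dX X dJ J P T} H a g.

Section MinimalCover.
Variables (K : fieldType) (dX : Order.disp_t) (X : finPOrderType dX).
Variables (dJ : Order.disp_t) (J : finPOrderType dJ) (P : cofunctor K X J).
Local Notation rho := (Defs.pmap P).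
Variables (T : rep K X) (H : hom_pred P T) (C : rep K X) (out : rhom C T).
Arguments H : clear implicits.

Record minimal_cover : Prop := MinimalCover {
  cover_subfunctor : subfunctor H;
  cover_natural : natural out;
  cover_mem : forall b h, natural h -> H b (hcomp h out);
  cover_lift : forall b g, H b g -> exists2 h, natural h & hcomp h out = g;
  cover_minimal : forall e, natural e -> hcomp e out = out -> is_iso e }.

Hypotheses (thinP : thin P) (cov : minimal_cover).

Lemma cover_coef_restr l b (h : rhom (pobj P b) (pobj P l)) y :
  natural h -> H l y -> H b (hcoef h *: hcomp (rho l b) y).
Proof.
have subH := cover_subfunctor cov; move=> nh Hy.
have [lb|nlb] := boolP (l <= b)%O; last first.
  by rewrite (hcoef_nle thinP nlb nh) scale0r; apply: (subspace0 (subfunctor_subspace subH b)).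
by apply: (subspaceZ (subfunctor_subspace subH b)); apply: (subfunctor_restr subH lb).
Qed.

Variables (m : J -> nat) (iota : forall l, 'I_(m l) -> rhom (pobj P l) C).
Variables (pi : forall l, 'I_(m l) -> rhom C (pobj P l)).
Arguments iota : clear implicits.
Arguments pi : clear implicits.
Hypothesis bp : biprod m iota pi.

Lemma cover_span_mod a g : H a g ->
  exists c : 'I_(m a) -> K, radical H a (g - \sum_i c i *: hcomp (iota a i) out).
Proof.
case/(cover_lift cov) => h nh <-{g}; have subH := cover_subfunctor cov.
pose w l := \sum_i hcoef (hcomp h (pi l i)) *: hcomp (iota l i) out.
have nhpi l i : natural (hcomp h (pi l i)) by apply/natural_hcomp/(natural_pi bp).
have Hw l : H l (w l).
  apply: (subspace_sum (subfunctor_subspace subH l)) => i _.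
  by apply: (subspaceZ (subfunctor_subspace subH l)); apply/(cover_mem cov)/(natural_iota bp).
have w0 l : ~~ (l <= a)%O -> w l = 0.
  by move=> nla; rewrite /w big1 // => i _; rewrite (hcoef_nle thinP nla) ?scale0r.
have -> : hcomp h out = \sum_l hcomp (rho l a) (w l).
  rewrite {1}(biprod_decomp bp h) hcomp_suml; apply: eq_bigr => l _.
  rewrite hcomp_suml hcomp_sumr; apply: eq_bigr => i _.
  by rewrite hcompA {1}(hcoefP thinP (nhpi l i)) hcompZl hcompZr.
exists (fun i => hcoef (hcomp h (pi a i))); exists w => [b _|]; first exact: Hw.
rewrite (bigD1 a) //= pmap_idE hcomp_idl [X in _ - X](_ : _ = w a) //.
rewrite addrAC subrr add0r big_mkcond [RHS]big_mkcond /=.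
apply: eq_bigr => l _; rewrite lt_neqAle; case: (l != a) => //=.
by case: (boolP (l <= a)%O) => // /w0 ->; rewrite hcomp0r.
Qed.

Lemma radical_lift a g : radical H a g -> exists v : rhom (pobj P a) C,
  [/\ natural v, hcomp v out = g & forall q : rhom C (pobj P a), natural q -> hcomp v q = 0].
Proof.
case=> w Hw ->{g}; have natS := @natural_subspace K dX X.
suff /fin_all_exists[hl hlP] b : exists h : rhom (pobj P b) C,
    (b < a)%O -> natural h /\ hcomp h out = w b.
  exists (\sum_(b | (b < a)%O) hcomp (rho b a) (hl b)); split.
  - apply: (subspace_sum (natS _ _)) => b ba; have [nhl _] := hlP b ba.
    exact/natural_hcomp/nhl/pmap_nat/ltW.
  - by rewrite hcomp_suml; apply: eq_bigr => b ba; rewrite hcompA (hlP b ba).2.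
  move=> q nq; rewrite hcomp_suml big1 // => b ba; have [nhl _] := hlP b ba.
  by rewrite hcompA (thin_hom_nle thinP _ (natural_hcomp nhl nq)) ?hcomp0r ?lt_geF.
have [ba|_] := boolP (b < a)%O; last by exists 0.
by have [h nh hw] := cover_lift cov (Hw b ba); exists h.
Qed.

Lemma cover_free_mod a : nonzero (pobj P a) -> forall c : 'I_(m a) -> K,
  radical H a (\sum_i c i *: hcomp (iota a i) out) -> forall i, c i = 0.
Proof.
move=> nza c /radical_lift[v [nv v_out v_q]] i0; apply/eqP; apply: contraT => nzc.
have natS := @natural_subspace K dX X.
pose xi := \sum_i c i *: iota a i.
(* [e] fixes [out], so it is invertible by minimality; yet it maps [xi], which has a
   nonzero [P a]-component, to [v], which has none *)
pose e := idh C - (c i0)^-1 *: hcomp (pi a i0) (xi - v).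
have nxi : natural xi.
  by apply: (subspace_sum (natS _ _)) => i _; apply/(subspaceZ (natS _ _))/(natural_iota bp).
have ne : natural e.
  apply: (subspaceB (natS _ _)); first exact: natural_id.
  apply/(subspaceZ (natS _ _))/natural_hcomp; first exact: (natural_pi bp).
  exact: (subspaceB (natS _ _)).
have e_out : hcomp e out = out.
  rewrite hcompBl hcomp_idl hcompZl hcompA hcompBl v_out hcomp_suml.
  by rewrite (eq_bigr _ (fun i _ => hcompZl _ _ _)) subrr hcomp0r scaler0 subr0.
have [f [nf [ef _]]] := cover_minimal cov ne e_out.
have xi_pi : hcomp xi (pi a i0) = c i0 *: idh (pobj P a).
  rewrite hcomp_suml (bigD1 i0) //= big1 ?addr0 => [|i ne_i]; rewrite hcompZl iota_pi //.
    by rewrite eqxx.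
  by rewrite (negbTE ne_i) scaler0.
have xi_e : hcomp xi e = v.
  rewrite hcompBr hcomp_idr hcompZr -hcompA xi_pi hcompZl hcomp_idl scalerA mulVf //.
  by rewrite scale1r opprB addrC subrK.
have : hcomp xi (pi a i0) = 0.
  rewrite -[xi](hcomp_idr xi) -(rhomP ef) -hcompA xi_e hcompA v_q //.
  exact/natural_hcomp/(natural_pi bp).
by rewrite xi_pi => /eqP; rewrite scaler_eq0 (negbTE nzc) (negbTE (idh_neq0 nza)).
Qed.

Lemma cover_basis_mod a : nonzero (pobj P a) ->
  basis_mod (H a) (radical H a) (fun i => hcomp (iota a i) out).
Proof.
split; [|exact: cover_span_mod|exact: cover_free_mod].
by move=> i; apply/(cover_mem cov)/(natural_iota bp).
Qed.

End MinimalCover.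

(** * Comparing two minimal covers *)

Section TwoCofunctors.
Variables (K : fieldType) (dJ : Order.disp_t) (J : finPOrderType dJ).
Variables (dX1 : Order.disp_t) (X1 : finPOrderType dX1) (P1 : cofunctor K X1 J).
Variables (dX2 : Order.disp_t) (X2 : finPOrderType dX2) (P2 : cofunctor K X2 J).
Local Notation rho1 := (Defs.pmap P1).
Local Notation rho2 := (Defs.pmap P2).
Variables (T1 : rep K X1) (T2 : rep K X2).
Variables (H1 : hom_pred P1 T1) (H2 : hom_pred P2 T2) (th : hom_map P1 T1 P2 T2).
Arguments H1 : clear implicits.
Arguments H2 : clear implicits.
Arguments th : clear implicits.

Section IsoRadical.
Hypotheses (subH1 : subfunctor H1) (subH2 : subfunctor H2) (isoth : subfun_iso H1 H2 th).

Lemma radical_iso a g : H1 a g -> radical H2 a (th a g) <-> radical H1 a g.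
Proof.
have [[mem lin restr] _ surj] := isoth; have sub1 := subfunctor_subspace subH1.
have th_restr_sum (w : forall b, rhom (pobj P1 b) T1) : (forall b, (b < a)%O -> H1 b (w b)) ->
    th a (\sum_(b | (b < a)%O) hcomp (rho1 b a) (w b)) =
    \sum_(b | (b < a)%O) hcomp (rho2 b a) (th b (w b)).
  move=> Hw; rewrite (linear_on_sum (sub1 a) (lin a)) => [|b ba]; last first.
    exact/(subfunctor_restr subH1 (ltW ba))/Hw.
  by apply: eq_bigr => b ba; apply: restr (ltW ba) (Hw b ba).
move=> Hg; split=> [[w' Hw' eg]|[w Hw ->]]; last first.
  by exists (fun b => th b (w b)) => [b ba|]; [apply/mem/Hw | apply: th_restr_sum].
suff /fin_all_exists[w wP] b : exists w, (b < a)%O -> H1 b w /\ th b w = w' b.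
  have Hw b : (b < a)%O -> H1 b (w b) by case/wP.
  exists w => //; apply: (subfun_iso_inj subH1 isoth Hg).
    apply: (subspace_sum (sub1 a)) => b ba.
    exact: (subfunctor_restr subH1 (ltW ba) (Hw b ba)).
  by rewrite eg th_restr_sum //; apply: eq_bigr => b /wP[_ ->].
have [ba|_] := boolP (b < a)%O; last by exists 0.
by have [w Hw thw] := surj b _ (Hw' b ba); exists w.
Qed.

Lemma iso_basis_mod a m (x : 'I_m -> rhom (pobj P1 a) T1) :
  basis_mod (H1 a) (radical H1 a) x -> basis_mod (H2 a) (radical H2 a) (fun i => th a (x i)).
Proof.
have [[mem lin _] _ surj] := isoth; have sub1 := subfunctor_subspace subH1.
case=> Hx span free.
have Hc c : H1 a (\sum_i c i *: x i).
  by apply: (subspace_sum (sub1 a)) => i _; apply: (subspaceZ (sub1 a)).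
have th_comb c : th a (\sum_i c i *: x i) = \sum_i c i *: th a (x i).
  rewrite (linear_on_sum (sub1 a) (lin a)) => [|i _]; last exact: (subspaceZ (sub1 a)).
  by apply: eq_bigr => i _; rewrite (linear_onZ (sub1 a) (lin a)).
split=> [i|g'|c]; first exact: mem.
  case/surj => g Hg <-; have [c rad] := span g Hg; exists c.
  by rewrite -th_comb -(linear_onB (lin a)) // radical_iso //; apply: (subspaceB (sub1 a)).
by rewrite -th_comb radical_iso //; apply: free.
Qed.

End IsoRadical.

Variables (C1 : rep K X1) (out1 : rhom C1 T1) (m1 : J -> nat).
Variables (iota1 : forall l, 'I_(m1 l) -> rhom (pobj P1 l) C1).
Variables (pi1 : forall l, 'I_(m1 l) -> rhom C1 (pobj P1 l)).
Arguments iota1 : clear implicits.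
Arguments pi1 : clear implicits.
Variables (C2 : rep K X2) (out2 : rhom C2 T2).
Hypotheses (cov1 : minimal_cover H1 out1) (bp1 : biprod m1 iota1 pi1).
Hypothesis cov2 : minimal_cover H2 out2.

Section CoverMultiplicity.
Variables (m2 : J -> nat) (iota2 : forall l, 'I_(m2 l) -> rhom (pobj P2 l) C2).
Variables (pi2 : forall l, 'I_(m2 l) -> rhom C2 (pobj P2 l)).
Hypotheses (thin1 : thin P1) (thin2 : thin P2) (bp2 : biprod m2 iota2 pi2).
Hypothesis isoth : subfun_iso H1 H2 th.

Lemma cover_mult_eq a : nonzero (pobj P1 a) -> nonzero (pobj P2 a) -> m1 a = m2 a.
Proof.
move=> nz1 nz2; apply: (basis_mod_card (radical_subspace (cover_subfunctor cov2) a)).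
  apply: (iso_basis_mod (cover_subfunctor cov1) isoth).
  exact: (cover_basis_mod thin1 cov1 bp1).
exact: (cover_basis_mod thin2 cov2 bp2).
Qed.

End CoverMultiplicity.

Section Lift.
Hypotheses (flat1 : flat P1) (mth : subfun_morph H1 H2 th).

Let thin1 := flat_thin flat1.

Lemma morph_coef_restr l b (h : rhom (pobj P1 b) (pobj P1 l)) y : natural h -> H1 l y ->
  th b (hcoef h *: hcomp (rho1 l b) y) = hcoef h *: hcomp (rho2 l b) (th l y).
Proof.
have [_ lin restr] := mth; have sub1 := subfunctor_subspace (cover_subfunctor cov1).
move=> nh Hy; have [lb|nlb] := boolP (l <= b)%O; last first.
  by rewrite (hcoef_nle thin1 nlb nh) !scale0r (linear_on0 (sub1 b) (lin b)).
rewrite (linear_onZ (sub1 b) (lin b)) ?restr //.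
exact: (subfunctor_restr (cover_subfunctor cov1) lb).
Qed.

Section LiftHom.
Variable gam : forall l, 'I_(m1 l) -> rhom (pobj P2 l) C2.
Arguments gam : clear implicits.
Hypothesis natural_gam : forall l i, natural (gam l i).
Hypothesis gam_out : forall l i, hcomp (gam l i) out2 = th l (hcomp (iota1 l i) out1).

Definition lift_hom : hom_map P1 C1 P2 C2 := fun b g =>
  \sum_l \sum_i hcoef (hcomp g (pi1 l i)) *: hcomp (rho2 l b) (gam l i).
Arguments lift_hom : clear implicits.

Lemma natural_lift_hom b g : natural g -> natural (lift_hom b g).
Proof.
move=> ng; have natS := @natural_subspace K dX2 X2.
apply: (subspace_sum (natS _ _)) => l _; apply: (subspace_sum (natS _ _)) => i _.
have ngpi : natural (hcomp g (pi1 l i)) by apply/natural_hcomp/(natural_pi bp1).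
have [lb|nlb] := boolP (l <= b)%O; last first.
  by rewrite (hcoef_nle thin1 nlb ngpi) scale0r; apply: (subspace0 (natS _ _)).
exact/(subspaceZ (natS _ _))/natural_hcomp/natural_gam/pmap_nat.
Qed.

Lemma lift_hom_lin b k g h : lift_hom b (k *: g + h) = k *: lift_hom b g + lift_hom b h.
Proof.
rewrite /lift_hom scaler_sumr -big_split; apply: eq_bigr => l _.
rewrite scaler_sumr -big_split; apply: eq_bigr => i _.
by rewrite hcompDl hcompZl hcoef_lin scalerDl scalerA.
Qed.

Lemma lift_hom_restr b a g : (b <= a)%O -> natural g ->
  lift_hom a (hcomp (rho1 b a) g) = hcomp (rho2 b a) (lift_hom b g).
Proof.
move=> ba ng; rewrite /lift_hom hcomp_sumr; apply: eq_bigr => l _.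
rewrite hcomp_sumr; apply: eq_bigr => i _.
have ngpi : natural (hcomp g (pi1 l i)) by apply/natural_hcomp/(natural_pi bp1).
rewrite hcompA (hcoef_restr flat1 ba ngpi) hcompZr.
have [lb|nlb] := boolP (l <= b)%O; last by rewrite (hcoef_nle thin1 nlb ngpi) !scale0r.
by rewrite (pmap_compE P2 lb ba) hcompA.
Qed.

Lemma lift_hom_out b g : natural g -> hcomp (lift_hom b g) out2 = th b (hcomp g out1).
Proof.
have [_ lin _] := mth; have sub1 := subfunctor_subspace (cover_subfunctor cov1).
move=> ng; have ngpi l i : natural (hcomp g (pi1 l i)) by apply/natural_hcomp/(natural_pi bp1).
have Hy l i : H1 l (hcomp (iota1 l i) out1) by apply/(cover_mem cov1)/(natural_iota bp1).
have Ht l i : H1 b (hcoef (hcomp g (pi1 l i)) *: hcomp (rho1 l b) (hcomp (iota1 l i) out1)).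
  exact: (cover_coef_restr thin1 cov1).
have -> : hcomp g out1 = \sum_l \sum_i
    hcoef (hcomp g (pi1 l i)) *: hcomp (rho1 l b) (hcomp (iota1 l i) out1).
  rewrite {1}(biprod_decomp bp1 g) hcomp_suml; apply: eq_bigr => l _.
  rewrite hcomp_suml; apply: eq_bigr => i _.
  by rewrite hcompA {1}(hcoefP thin1 (ngpi l i)) hcompZl.
rewrite (linear_on_sum (sub1 b) (lin b)) => [|l _]; last first.
  by apply: (subspace_sum (sub1 b)) => i _.
rewrite hcomp_suml; apply: eq_bigr => l _.
rewrite (linear_on_sum (sub1 b) (lin b)) // hcomp_suml; apply: eq_bigr => i _.
by rewrite morph_coef_restr // -gam_out hcompZl hcompA.
Qed.

End LiftHom.

Lemma morph_lift : exists2 A : hom_map P1 C1 P2 C2,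
  subfun_morph (natural_hom P1 C1) (natural_hom P2 C2) A &
  forall b g, natural g -> hcomp (A b g) out2 = th b (hcomp g out1).
Proof.
suff [gam gamP] : exists gam : forall l, 'I_(m1 l) -> rhom (pobj P2 l) C2,
    forall l i, natural (gam l i) /\ hcomp (gam l i) out2 = th l (hcomp (iota1 l i) out1).
  have ngam l i := (gamP l i).1; have gam_out l i := (gamP l i).2.
  exists (lift_hom gam); last exact: (lift_hom_out gam_out).
  split=> [b g|b k g h _ _|b a g]; first exact: natural_lift_hom.
    exact: lift_hom_lin.
  exact: lift_hom_restr.
suff /fin_all_exists[gam gamP] l : exists gam_l : forall i : 'I_(m1 l), rhom (pobj P2 l) C2,
    forall i, natural (gam_l i) /\ hcomp (gam_l i) out2 = th l (hcomp (iota1 l i) out1).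
  by exists gam.
suff /fin_all_exists[gam_l gam_lP] i : exists h : rhom (pobj P2 l) C2,
    natural h /\ hcomp h out2 = th l (hcomp (iota1 l i) out1) by exists gam_l.
have [h nh <-] := cover_lift cov2 (morph_mem mth (cover_mem cov1 (natural_iota bp1 i))).
by exists h.
Qed.

End Lift.

End TwoCofunctors.

Section Roundtrip.
Variables (K : fieldType) (dJ : Order.disp_t) (J : finPOrderType dJ).
Variables (dX1 : Order.disp_t) (X1 : finPOrderType dX1) (P1 : cofunctor K X1 J).
Variables (dX2 : Order.disp_t) (X2 : finPOrderType dX2) (P2 : cofunctor K X2 J).
Variables (T1 : rep K X1) (T2 : rep K X2) (H1 : hom_pred P1 T1).
Variables (th : hom_map P1 T1 P2 T2) (th' : hom_map P2 T2 P1 T1).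
Arguments H1 : clear implicits.
Arguments th : clear implicits.
Arguments th' : clear implicits.
Variables (C1 : rep K X1) (out1 : rhom C1 T1) (m1 : J -> nat).
Variables (iota1 : forall l, 'I_(m1 l) -> rhom (pobj P1 l) C1).
Variables (pi1 : forall l, 'I_(m1 l) -> rhom C1 (pobj P1 l)).
Variables (C2 : rep K X2) (out2 : rhom C2 T2).
Variables (A : hom_map P1 C1 P2 C2) (B : hom_map P2 C2 P1 C1).
Arguments A : clear implicits.
Arguments B : clear implicits.
Hypotheses (thin1 : thin P1) (cov1 : minimal_cover H1 out1) (bp1 : biprod m1 iota1 pi1).
Hypotheses (mA : subfun_morph (natural_hom P1 C1) (natural_hom P2 C2) A)
  (mB : subfun_morph (natural_hom P2 C2) (natural_hom P1 C1) B).
Hypotheses (A_out : forall b g, natural g -> hcomp (A b g) out2 = th b (hcomp g out1))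
  (B_out : forall b g, natural g -> hcomp (B b g) out1 = th' b (hcomp g out2)).
Hypothesis thK : forall b g, H1 b g -> th' b (th b g) = g.

Lemma lift_roundtrip : exists2 e : rhom C1 C1, natural e /\ hcomp e out1 = out1 &
  forall b g, natural g -> B b (A b g) = hcomp g e.
Proof.
have [e ne eBA] := morph_postcomp thin1 (subfun_morph_comp mA mB) bp1.
exists e => //; split=> //; apply: (biprod_hom_ext bp1) => l i.
have ni := natural_iota bp1 i; have nAi := morph_mem mA ni.
by rewrite -hcompA -eBA // B_out // A_out // thK //; apply: (cover_mem cov1).
Qed.

End Roundtrip.

Section SyzygyIso.
Variables (K : fieldType) (dJ : Order.disp_t) (J : finPOrderType dJ).
Variables (dX1 : Order.disp_t) (X1 : finPOrderType dX1) (P1 : cofunctor K X1 J).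
Variables (dX2 : Order.disp_t) (X2 : finPOrderType dX2) (P2 : cofunctor K X2 J).
Variables (T1 : rep K X1) (T2 : rep K X2).
Variables (H1 : hom_pred P1 T1) (H2 : hom_pred P2 T2) (th : hom_map P1 T1 P2 T2).
Variables (C1 : rep K X1) (out1 : rhom C1 T1) (m1 : J -> nat).
Variables (iota1 : forall l, 'I_(m1 l) -> rhom (pobj P1 l) C1).
Variables (pi1 : forall l, 'I_(m1 l) -> rhom C1 (pobj P1 l)).
Variables (C2 : rep K X2) (out2 : rhom C2 T2) (m2 : J -> nat).
Variables (iota2 : forall l, 'I_(m2 l) -> rhom (pobj P2 l) C2).
Variables (pi2 : forall l, 'I_(m2 l) -> rhom C2 (pobj P2 l)).
Hypotheses (flat1 : flat P1) (cov1 : minimal_cover H1 out1) (bp1 : biprod m1 iota1 pi1).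
Hypotheses (flat2 : flat P2) (cov2 : minimal_cover H2 out2) (bp2 : biprod m2 iota2 pi2).
Hypothesis isoth : subfun_iso H1 H2 th.

Lemma iso_hom_ker : exists A, subfun_iso (hom_ker P1 out1) (hom_ker P2 out2) A.
Proof.
have subH1 := cover_subfunctor cov1; have subH2 := cover_subfunctor cov2.
have [th' [iso' thK th'K]] := subfun_iso_sym subH1 subH2 isoth.
have [A mA A_out] := morph_lift cov1 bp1 cov2 flat1 (iso_morph isoth).
have [B mB B_out] := morph_lift cov2 bp2 cov1 flat2 (iso_morph iso').
have [e [ne e_out] eBA] := lift_roundtrip (flat_thin flat1) cov1 bp1 mA mB A_out B_out thK.
have [e' [ne' e'_out] eAB] := lift_roundtrip (flat_thin flat2) cov2 bp2 mB mA B_out A_out th'K.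
have [f [nf [ef _]]] := cover_minimal cov1 ne e_out.
have [f' [nf' [_ fe']]] := cover_minimal cov2 ne' e'_out.
have th'0 b : th' b 0 = 0.
  exact: (linear_on0 (subfunctor_subspace subH2 b) (morph_linear (iso_morph iso') b)).
have B0 b : B b 0 = 0.
  exact: (linear_on0 (natural_subspace _ _) (morph_linear mB b)).
exists A; split; first split.
- move=> b g [ng g0]; split; first exact: (morph_mem mA).
  rewrite A_out // g0.
  exact: (linear_on0 (subfunctor_subspace subH1 b) (morph_linear (iso_morph isoth) b)).
- by move=> b; apply: linear_on_sub (morph_linear mA b) => g [].
- by move=> b a g ba [ng _]; apply: (morph_restr mA).
- move=> b g [ng _] A0; have : hcomp g e = 0 by rewrite -eBA // A0 B0.
  by move=> /(congr1 (fun h => hcomp h f)); rewrite hcompA (rhomP ef) hcomp_idr hcomp0l.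
- move=> b g' [ng' g'0]; have ng'f := natural_hcomp ng' nf'.
  have f'_out : hcomp f' out2 = out2 by rewrite -{1}e'_out -hcompA (rhomP fe') hcomp_idl.
  exists (B b (hcomp g' f')); first split; first exact: (morph_mem mB).
    by rewrite B_out // hcompA f'_out g'0.
  by rewrite eAB // hcompA (rhomP fe') hcomp_idr.
Qed.

End SyzygyIso.

(** * Minimal resolutions *)

Section MinimalResolution.
Variables (K : fieldType) (dX : Order.disp_t) (X : finPOrderType dX).
Variables (dJ : Order.disp_t) (J : finPOrderType dJ) (P : cofunctor K X J).
Variables (N : rep K X) (C : nat -> rep K X) (mult : nat -> J -> nat).
Variables (dd : forall n, rhom (C n.+1) (C n)) (eps : rhom (C 0%N) N).
Hypothesis hr : is_min_res (pobj P) N C mult dd eps.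

(* Maps into the d-th syzygy of [N]: for d > 0, maps into [C d.-1] killed by its
   outgoing differential. *)
Definition syzygy d : hom_pred P (res_tgt N C d) :=
  match d as d0 return hom_pred P (res_tgt N C d0) with
  | 0%N => natural_hom P N
  | d'.+1 => hom_ker P (res_out eps dd d')
  end.
Arguments syzygy : clear implicits.

Lemma min_res_biprod d :
  exists (iota : forall l, 'I_(mult d l) -> rhom (pobj P l) (C d)) pi, biprod (mult d) iota pi.
Proof. by case: hr => [[/(_ d)/is_biprodP]]. Qed.

Lemma natural_res_out d : natural (res_out eps dd d).
Proof. by case: hr => [[_ [neps ndd]] _ _ _ _]; case: d. Qed.

Lemma min_res_cover d : minimal_cover (syzygy d) (res_out eps dd d).
Proof.
case: hr => [_ cx lift0 liftS minl]; split=> //.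
- by case: d => [|d]; [apply: natural_hom_subfunctor | apply: hom_ker_subfunctor].
- exact: natural_res_out.
- case: d => [|d] b h nh; first exact/natural_hcomp/natural_res_out.
  split; first exact/natural_hcomp/natural_res_out.
  by rewrite hcompA (rhomP (cx d)) hcomp0r.
- case: d => [|d] b g /=; first by case/lift0 => h [nh /rhomP]; exists h.
  case=> ng g0; have [h [nh /rhomP]] := liftS d b g ng (fun x => congr1 (fun f => f x) g0).
  by exists h.
- by move=> e ne eo; apply: minl => // x; rewrite eo.
Qed.

End MinimalResolution.

Arguments syzygy {K dX X dJ J} P {N C} dd eps d b g.

Section ResolutionComparison.
Variables (K : fieldType) (dJ : Order.disp_t) (J : finPOrderType dJ).
Variables (dX1 : Order.disp_t) (X1 : finPOrderType dX1) (P1 : cofunctor K X1 J).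
Variables (N1 : rep K X1) (C1 : nat -> rep K X1) (mult1 : nat -> J -> nat).
Variables (dd1 : forall n, rhom (C1 n.+1) (C1 n)) (eps1 : rhom (C1 0%N) N1).
Variables (dX2 : Order.disp_t) (X2 : finPOrderType dX2) (P2 : cofunctor K X2 J).
Variables (N2 : rep K X2) (C2 : nat -> rep K X2) (mult2 : nat -> J -> nat).
Variables (dd2 : forall n, rhom (C2 n.+1) (C2 n)) (eps2 : rhom (C2 0%N) N2).
Hypotheses (hr1 : is_min_res (pobj P1) N1 C1 mult1 dd1 eps1)
  (hr2 : is_min_res (pobj P2) N2 C2 mult2 dd2 eps2).

Lemma min_res_syzygy_iso : flat P1 -> flat P2 ->
  (exists th, subfun_iso (syzygy P1 dd1 eps1 0) (syzygy P2 dd2 eps2 0) th) ->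
  forall d, exists th, subfun_iso (syzygy P1 dd1 eps1 d) (syzygy P2 dd2 eps2 d) th.
Proof.
move=> flat1 flat2 iso0; elim=> // d [th isoth].
have [iota1 [pi1 bp1]] := min_res_biprod hr1 d; have [iota2 [pi2 bp2]] := min_res_biprod hr2 d.
exact: (iso_hom_ker flat1 (min_res_cover hr1 d) bp1 flat2 (min_res_cover hr2 d) bp2 isoth).
Qed.

Lemma min_res_mult_eq d a th : thin P1 -> thin P2 ->
  subfun_iso (syzygy P1 dd1 eps1 d) (syzygy P2 dd2 eps2 d) th ->
  nonzero (pobj P1 a) -> nonzero (pobj P2 a) -> mult1 d a = mult2 d a.
Proof.
move=> thin1 thin2 isoth.
have [iota1 [pi1 bp1]] := min_res_biprod hr1 d; have [iota2 [pi2 bp2]] := min_res_biprod hr2 d.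
exact: (cover_mult_eq (min_res_cover hr1 d) bp1 (min_res_cover hr2 d) thin1 thin2 bp2 isoth).
Qed.

End ResolutionComparison.

(** * Free functors and the functor R *)

Section FreeFunctors.
Variables (K : fieldType) (dJ : Order.disp_t) (J : finPOrderType dJ).
Local Notation free := (@free_rep K _ J).

Lemma free_dim_le (b x : J) : (b <= x)%O -> free_dim b x = 1%N.
Proof. by rewrite /free_dim => ->. Qed.

Lemma free_dim01 (u v u' v' : J) : (u' <= u)%O -> (v <= v')%O ->
  free_dim u v = 0%N \/ free_dim u' v' = 1%N.
Proof.
move=> u'u vv'; have [uv|nuv] := boolP (u <= v)%O; last by left; rewrite /free_dim (negbTE nuv).
by right; apply: free_dim_le; apply: le_trans vv'; apply: le_trans uv.
Qed.

Lemma free_ord_le (b x : J) : 'I_(free_dim b x) -> (b <= x)%O.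
Proof. by case=> i; rewrite /free_dim; case: (b <= x)%O. Qed.

Lemma free_ord_eq (b x : J) (i j : 'I_(free_dim b x)) : i = j.
Proof.
have le1 : (free_dim b x <= 1)%N := leq_b1 _.
apply/val_inj; move: (leq_trans (ltn_ord i) le1) (leq_trans (ltn_ord j) le1).
by rewrite !ltnS !leqn0 => /eqP /= -> /eqP ->.
Qed.

Lemma const1_mul p q r : (p = 0%N \/ q = 1%N) ->
  (const_mx 1 : 'M[K]_(p, q)) *m (const_mx 1 : 'M[K]_(q, r)) = const_mx 1.
Proof.
by case=> ->; apply/matrixP => i j; [case: i | rewrite !mxE big_ord1 !mxE mulr1].
Qed.

Definition free_pmap (a b : J) : rhom (free b) (free a) := fun x => const_mx 1.

Lemma natural_free_pmap a b : (a <= b)%O -> natural (free_pmap a b).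
Proof.
by move=> ab x y xy; rewrite /free_pmap /= !const1_mul //; apply: free_dim01.
Qed.

Lemma free_pmap_id a : heq (free_pmap a a) (idh (free a)).
Proof. by move=> x; apply: free_map_id. Qed.

Lemma free_pmap_comp a b c : (a <= b)%O -> (b <= c)%O ->
  heq (free_pmap a c) (hcomp (free_pmap b c) (free_pmap a b)).
Proof.
by move=> ab bc x; rewrite /Defs.comp /free_pmap const1_mul //; apply: free_dim01.
Qed.

Definition free_cofunctor : cofunctor K J J :=
  Cofunctor natural_free_pmap free_pmap_id free_pmap_comp.

Lemma free_nonzero a : nonzero (free a).
Proof. by exists a; rewrite /= free_dim_le. Qed.

Section Yoneda.
Variable Y : rep K J.

Definition free_gen b : 'I_(free_dim b b) := cast_ord (esym (free_dim_le (lexx b))) ord0.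

Definition yoneda b (g : rhom (free b) Y) : 'rV[K]_(rdim Y b) := row (free_gen b) (g b).

Lemma yoneda_entry b (g : rhom (free b) Y) x i j : natural g ->
  g x i j = (yoneda g *m rmap Y b x) 0 j.
Proof.
have bx := free_ord_le i.
move=> /(_ b x bx) /matrixP /(_ (free_gen b) j); rewrite !mxE (bigD1 i) //= big1 => [|t].
  by rewrite mxE mul1r addr0 => ->; apply: eq_bigr => t _; rewrite !mxE.
by rewrite (free_ord_eq t i) eqxx.
Qed.

Lemma yoneda_inj b (g h : rhom (free b) Y) : natural g -> natural h ->
  yoneda g = yoneda h -> g = h.
Proof.
move=> ng nh e; apply: rhomP => x; apply/matrixP => i j.
by rewrite (yoneda_entry _ _ ng) (yoneda_entry _ _ nh) e.
Qed.

Lemma yoneda_lin b k (g h : rhom (free b) Y) : yoneda (k *: g + h) = k *: yoneda g + yoneda h.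
Proof. by apply/rowP => j; rewrite !mxE. Qed.

Definition yoneda_inv b (v : 'rV[K]_(rdim Y b)) : rhom (free b) Y :=
  fun x => const_mx 1 *m (v *m rmap Y b x).

Lemma natural_yoneda_inv b v : natural (@yoneda_inv b v).
Proof.
move=> x y xy; rewrite /yoneda_inv /= mulmxA const1_mul; last exact: free_dim01.
have [bx|nbx] := boolP (b <= x)%O; first by rewrite -!mulmxA (rmap_comp Y bx xy).
by apply/matrixP => i; case/negP: nbx; apply: free_ord_le i.
Qed.

Lemma yoneda_invK b v : yoneda (@yoneda_inv b v) = v.
Proof.
rewrite /yoneda /yoneda_inv row_mul row_const rmap_id mulmx1.
by apply/rowP => j; rewrite !mxE big_ord1 !mxE mul1r.
Qed.

Lemma yoneda_restr b a (g : rhom (free b) Y) : (b <= a)%O -> natural g ->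
  yoneda (hcomp (free_pmap b a) g) = yoneda g *m rmap Y b a.
Proof.
move=> ba ng; apply/rowP => j; rewrite /yoneda /Defs.comp /free_pmap !mxE.
have t0 : 'I_(free_dim b a) by rewrite free_dim_le //; apply: ord0.
rewrite (bigD1 t0) //= big1 => [|t]; last by rewrite (free_ord_eq t t0) eqxx.
by rewrite mxE mul1r addr0 (yoneda_entry _ _ ng) mxE.
Qed.

End Yoneda.

Lemma free_cofunctor_flat : flat free_cofunctor.
Proof.
move=> a _ b.
split=> [f nf|ab]; first split=> [ab|nab].
- have j0 : 'I_(free_dim a b) by rewrite free_dim_le //; apply: ord0.
  exists (yoneda f 0 j0); suff e : f = yoneda f 0 j0 *: free_pmap a b by move=> x; rewrite {1}e.
  apply: yoneda_inj => //.
    by apply/(subspaceZ (natural_subspace _ _))/natural_free_pmap.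
  by apply/rowP => j; rewrite [in RHS]mxE scalehE !mxE mulr1 (free_ord_eq j j0).
- suff -> : f = 0 by [].
  apply: yoneda_inj => //; first exact: (subspace0 (natural_subspace _ _)).
  by apply/rowP => j; case/negP: nab; apply: free_ord_le j.
- have j0 : 'I_(free_dim a b) by rewrite free_dim_le //; apply: ord0.
  by move=> /(_ b) /matrixP /(_ (free_gen b) j0); rewrite !mxE => /eqP; rewrite oner_eq0.
Qed.

End FreeFunctors.

Section RepresentsR.
Variables (K : fieldType) (dI : Order.disp_t) (I : finPOrderType dI).
Variables (dJ : Order.disp_t) (J : finPOrderType dJ) (P : cofunctor K I J).
Variables (M : rep K I) (G : rep K J) (phi : forall b : J, 'rV[K]_(rdim G b) -> rhom (pobj P b) M).
Arguments phi : clear implicits.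
Hypothesis hR : represents_R P M G phi.

Definition represent_hom : hom_map (free_cofunctor K J) G P M := fun b g => phi b (yoneda g).

Lemma represent_hom_iso :
  subfun_iso (natural_hom (free_cofunctor K J) G) (natural_hom P M) represent_hom.
Proof.
case: hR => phi_nat phi_lin phi_inj phi_surj phi_restr; split; first split.
- by move=> b g _; apply: phi_nat.
- by move=> b k g h _ _; apply: rhomP; rewrite /represent_hom yoneda_lin; apply: phi_lin.
- move=> b a g ba ng; apply: rhomP; rewrite /represent_hom /= yoneda_restr //.
  exact: phi_restr.
- move=> b g ng g0; have {}g0 := phi_inj b _ (fun x => congr1 (fun f => f x) g0).
  apply: yoneda_inj => //.
    exact: (subspace0 (natural_subspace _ _)).
  by rewrite g0; apply/rowP => j; rewrite !mxE.
- move=> b f nf; have [v /rhomP phiv] := phi_surj b f nf.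
  by exists (yoneda_inv v); [apply: natural_yoneda_inv | rewrite /represent_hom yoneda_invK].
Qed.

End RepresentsR.

Theorem proposition5p13 (K : fieldType)
  (dI : Order.disp_t) (I : finPOrderType dI)
  (dJ : Order.disp_t) (J : finPOrderType dJ)
  (P : cofunctor K I J) (M : rep K I) :
  (thin P ->
    forall a : J, nonzero (pobj P a) ->
    forall (C : nat -> rep K I) (mult : nat -> J -> nat)
           (dd : forall n, rhom (C n.+1) (C n)) (eps : rhom (C 0%N) M),
      is_min_res (pobj P) M C mult dd eps ->
    forall (G : rep K J) (phi : forall b : J, 'rV[K]_(rdim G b) -> rhom (pobj P b) M),
      represents_R P M G phi ->
    forall (C' : nat -> rep K J) (mult' : nat -> J -> nat)
           (dd' : forall n, rhom (C' n.+1) (C' n)) (eps' : rhom (C' 0%N) G),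
      is_min_res (@free_rep K _ J) G C' mult' dd' eps' ->
      mult 0%N a = mult' 0%N a)
  /\
  (flat P ->
    forall (d : nat) (a : J), nonzero (pobj P a) ->
    forall (C : nat -> rep K I) (mult : nat -> J -> nat)
           (dd : forall n, rhom (C n.+1) (C n)) (eps : rhom (C 0%N) M),
      is_min_res (pobj P) M C mult dd eps ->
    forall (G : rep K J) (phi : forall b : J, 'rV[K]_(rdim G b) -> rhom (pobj P b) M),
      represents_R P M G phi ->
    forall (C' : nat -> rep K J) (mult' : nat -> J -> nat)
           (dd' : forall n, rhom (C' n.+1) (C' n)) (eps' : rhom (C' 0%N) G),
      is_min_res (@free_rep K _ J) G C' mult' dd' eps' ->
      mult d a = mult' d a).
Proof.
have free_flat := @free_cofunctor_flat K _ J; have free_thin := flat_thin free_flat.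
split=> [thinP a nza C mult dd eps hr G phi hR C' mult' dd' eps' hr'|].
  apply/esym/(min_res_mult_eq (P1 := free_cofunctor K J) (d := 0%N) hr' hr free_thin thinP
    (represent_hom_iso hR)) => //.
  exact: free_nonzero.
move=> flatP d a nza C mult dd eps hr G phi hR C' mult' dd' eps' hr'.
have [th isoth] := min_res_syzygy_iso (P1 := free_cofunctor K J) hr' hr free_flat flatP
  (ex_intro _ _ (represent_hom_iso hR)) d.
apply/esym/(min_res_mult_eq (P1 := free_cofunctor K J) hr' hr _ (flat_thin flatP) isoth) => //.
exact: free_nonzero.
Qed.
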